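(* Let $u\in k_F^\times$. The element $\varphi_{\epsilon^{-1}u}(1+\varphi_{\epsilon^{-1}u})\in\mathrm{GL}_{2n+1}(E)$ is strongly $\theta$-regular $\theta$-semisimple, the element $-N(1+\varphi_{\epsilon^{-1}u})\in\mathrm{U}_{E/F}(2n+1)(F)$ is strongly regular semisimple, and $-N(1+\varphi_{\epsilon^{-1}u})$ is a norm of $\varphi_{\epsilon^{-1}u}(1+\varphi_{\epsilon^{-1}u})$.
   Context: $p$ odd, $F$ a $p$-adic field, $E/F$ unramified quadratic with conjugation $c$, $\varpi$ a uniformizer of $F$, $k_E,k_F$ residue fields; $\epsilon\in k_E^\times$ fixed with $\epsilon^2$ a non-square in $k_F^\times$; elements of $k_E$ are identified with their Teichmüller lifts. For $a\in k_E^\times$, $\varphi_a=\begin{pmatrix}0&I_{2n}\\\varpi a&0\end{pmatrix}\in\mathrm{GL}_{2n+1}(E)$. $J\in\mathrm{GL}_{2n+1}(E)$ antidiagonal with $J_{i,2n+2-i}=(-1)^{i-1}$, $\theta(g)=J\,{}^tc(g)^{-1}J^{-1}$, $N(g)=g\theta(g)$, $\mathrm{U}_{E/F}(2n+1)(F)=\{g\in\mathrm{GL}_{2n+1}(E)\mid{}^tc(g)Jg=J\}$. Strong ($\theta$-)regularity and $\theta$-semisimplicity are in the sense of Kottwitz–Shelstad. Norm: $h$ is a norm of $g$ if they correspond under the Kottwitz–Shelstad map from semisimple conjugacy classes of $\mathrm{U}_{E/F}(2n+1)(\bar F)\cong\mathrm{GL}_{2n+1}(\bar F)$ to $\theta$-semisimple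 $\theta$-conjugacy classes of $\mathrm{GL}_{2n+1}(\bar F)^2$, given on diagonal tori by $\mathrm{diag}(t_1/s_{2n+1},\ldots,t_{2n+1}/s_1)\leftrightarrow(\mathrm{diag}(t_i),\mathrm{diag}(s_i))$. *)

From HB Require Import structures.
From mathcomp Require Import all_boot all_order all_algebra.
Set Implicit Arguments. Unset Strict Implicit. Unset Printing Implicit Defensive.
Import Order.TTheory GRing.Theory Num.Theory.
Local Open Scope ring_scope.

(* Discrete valuations on a field E (the value of v at 0 is irrelevant) *)

Definition vge (E : fieldType) (v : E -> int) (k : int) (x : E) : bool :=
  (x == 0) || (k <= v x).
Definition in_O (E : fieldType) (v : E -> int) (x : E) : bool := vge v 0 x.
Definition in_m (E : fieldType) (v : E -> int) (x : E) : bool := vge v 1 x.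

Definition discrete_valuation (E : fieldType) (v : E -> int) : Prop :=
  [/\ forall x y : E, x != 0 -> y != 0 -> v (x * y) = v x + v y,
      forall (k : int) (x y : E), vge v k x -> vge v k y -> vge v k (x + y)
    & exists x : E, x != 0 /\ v x = 1].

Definition v_complete (E : fieldType) (v : E -> int) : Prop :=
  forall u : nat -> E,
    (forall k : int, exists N, forall i j, (N <= i)%N -> (N <= j)%N -> vge v k (u i - u j)) ->
    exists l : E, forall k : int, exists N, forall i, (N <= i)%N -> vge v k (u i - l).

(* the residue field of the valuation ring {x in O | P x} has exactly q elements:
   a system of q pairwise incongruent representatives mod m exhausting it *)
Definition residue_card (E : fieldType) (v : E -> int) (P : pred E) (q : nat) : Prop :=
  exists s : seq E,
    [/\ size s = q,
        forall x, x \in s -> P x /\ in_O v x,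
        forall i j, (i < q)%N -> (j < q)%N -> i != j -> ~~ in_m v (s`_i - s`_j)
      & forall x, P x -> in_O v x -> exists2 y, y \in s & in_m v (x - y)].

(* E is a p-adic field (char 0, complete, discretely valued, finite residue field
   of characteristic p), c is an involutive automorphism of E with fixed field F,
   F is a p-adic field with residue field of q elements, and E/F is the unramified
   quadratic extension (residue field of E has q^2 elements, uniformizer of F is one of E). *)
Definition unramified_quadratic_padic (p q : nat) (E : fieldType) (v : E -> int)
    (c : {rmorphism E -> E}) : Prop :=
  [/\ [pchar E] =i pred0, discrete_valuation v & v_complete v] /\
  [/\ (forall x, x != 0 -> v (c x) = v x),
      (forall x, c (c x) = x) /\ (exists x, c x != x),
      [/\ prime p, odd p & in_m v p%:R],
      residue_card v (fun x => c x == x) q /\ residue_card v predT (q ^ 2)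
    & exists w : E, [/\ c w = w, w != 0 & v w = 1]].

(* J : antidiagonal, J_{i,2n+2-i} = (-1)^{i-1} (1-indexed), i.e. 0-indexed i+j = m-1, sign (-1)^i *)
Definition Jmx (R : pzRingType) (m : nat) : 'M[R]_m :=
  \matrix_(i < m, j < m) (if (i + j == m.-1)%N then (-1) ^+ i else 0).

Definition theta (E : fieldType) (c : {rmorphism E -> E}) (m : nat) (g : 'M[E]_m) : 'M[E]_m :=
  Jmx E m *m invmx ((map_mx c g)^T) *m invmx (Jmx E m).

Definition Nmap (E : fieldType) (c : {rmorphism E -> E}) (m : nat) (g : 'M[E]_m) : 'M[E]_m :=
  g *m theta c g.

Definition in_unitary (E : fieldType) (c : {rmorphism E -> E}) (m : nat) (g : 'M[E]_m) : bool :=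
  (map_mx c g)^T *m Jmx E m *m g == Jmx E m.

(* phi_a = [[0, I_{m-1}], [varpi a, 0]] *)
Definition phimx (E : fieldType) (varpi a : E) (m : nat) : 'M[E]_m :=
  \matrix_(i < m, j < m)
    (if (j == i.+1 :> nat) then 1
     else if ((i == m.-1 :> nat) && (j == 0 :> nat)) then varpi * a else 0).

(* Res_{E/F} GL_m (K) = GL_m(K)^2 via g |-> (ι g, ι (c g)); U_{E/F}(m)(K) = GL_m(K)
   via g |-> ι g.  On GL_m(K)^2 the automorphism theta becomes
   (x1, x2) |-> (J t(x2)^{-1} J^{-1}, J t(x1)^{-1} J^{-1}). *)

Definition algebraic_closure_of (E : fieldType) (K : closedFieldType)
    (iota : {rmorphism E -> K}) : Prop :=
  forall k : K, exists P : {poly E}, P != 0 /\ root (map_poly iota P) k.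

Definition thetaK (K : fieldType) (m : nat) (y : 'M[K]_m) : 'M[K]_m :=
  Jmx K m *m (invmx y)^T *m invmx (Jmx K m).

Definition GL2 (K : fieldType) (m : nat) (x : 'M[K]_m * 'M[K]_m) : bool :=
  (x.1 \in unitmx) && (x.2 \in unitmx).

Definition theta2 (K : fieldType) (m : nat) (x : 'M[K]_m * 'M[K]_m) : 'M[K]_m * 'M[K]_m :=
  (thetaK x.2, thetaK x.1).

Definition mul2 (K : fieldType) (m : nat) (x y : 'M[K]_m * 'M[K]_m) : 'M[K]_m * 'M[K]_m :=
  (x.1 *m y.1, x.2 *m y.2).

Definition inv2 (K : fieldType) (m : nat) (x : 'M[K]_m * 'M[K]_m) : 'M[K]_m * 'M[K]_m :=
  (invmx x.1, invmx x.2).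

Definition tw_act (K : fieldType) (m : nat) (x d : 'M[K]_m * 'M[K]_m) : 'M[K]_m * 'M[K]_m :=
  mul2 (mul2 x d) (inv2 (theta2 x)).

Definition bc (E : fieldType) (K : fieldType) (iota : {rmorphism E -> K})
    (c : {rmorphism E -> E}) (m : nat) (g : 'M[E]_m) : 'M[K]_m * 'M[K]_m :=
  (map_mx iota g, map_mx iota (map_mx c g)).

Definition diag_pair (K : fieldType) (m : nat) (t s : 'rV[K]_m) : 'M[K]_m * 'M[K]_m :=
  (diag_mx t, diag_mx s).

Definition torus_el (K : fieldType) (m : nat) (t : 'rV[K]_m) : Prop :=
  forall i, t 0 i != 0.

(* theta-semisimple: Int(d) o theta preserves a theta-stable Borel pair; since theta
   preserves the diagonal/upper-triangular pair, this means d is theta-conjugate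
   into the diagonal torus T x T *)
Definition theta_semisimple (K : fieldType) (m : nat) (d : 'M[K]_m * 'M[K]_m) : Prop :=
  exists x, GL2 x /\ exists t s : 'rV[K]_m,
    [/\ torus_el t, torus_el s & tw_act x d = diag_pair t s].

Definition strongly_theta_regular (K : fieldType) (m : nat) (d : 'M[K]_m * 'M[K]_m) : Prop :=
  GL2 d /\
  forall x y, GL2 x -> GL2 y -> tw_act x d = d -> tw_act y d = d -> mul2 x y = mul2 y x.

Definition semisimple (K : fieldType) (m : nat) (h : 'M[K]_m) : Prop :=
  exists y, y \in unitmx /\ exists t : 'rV[K]_m,
    torus_el t /\ y *m h *m invmx y = diag_mx t.

Definition strongly_regular (K : fieldType) (m : nat) (h : 'M[K]_m) : Prop :=
  h \in unitmx /\
  forall x y, x \in unitmx -> y \in unitmx -> x *m h = h *m x -> y *m h = h *m y ->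
    x *m y = y *m x.

(* Kottwitz-Shelstad norm: the semisimple class of h corresponds to the
   theta-semisimple theta-class of d under
   diag(t_i / s_{m+1-i}) <-> (diag(t_i), diag(s_i))  (1-indexed) *)
Definition is_norm (K : fieldType) (m : nat) (h : 'M[K]_m) (d : 'M[K]_m * 'M[K]_m) : Prop :=
  exists t s : 'rV[K]_m, [/\ torus_el t, torus_el s,
    (exists x, GL2 x /\ tw_act x d = diag_pair t s)
  & exists y, y \in unitmx /\
      y *m h *m invmx y = diag_mx (\row_i (t 0 i / s 0 (rev_ord i)))].

From HB Require Import structures.
From mathcomp Require Import all_boot all_order all_algebra separable.
From mathcomp Require Import zify ring.
Set Implicit Arguments. Unset Strict Implicit. Unset Printing Implicit Defensive.
Import Order.TTheory GRing.Theory Num.Theory.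
Local Open Scope ring_scope.

(* Put a := eps^-1 u.  Since c(eps) = -eps, we get c(a) = -a, hence Jadj (c P) = -P for
   P := phi_a, where Jadj A := J t(A) J.  Therefore theta(1 + P) = (1 - P)^-1, so
   -N(1 + P) = -(1 + P)(1 - P)^-1 is (minus) a Cayley transform of a skew matrix, hence
   unitary, and c(g) = Jadj ((1 - P)(-P)).  Over K, P is diagonalized by a Vandermonde
   matrix: its eigenvalues are the distinct (2n+1)-th roots l_i of varpi a, none of which
   is 0, 1 or -1 because varpi a has valuation 1.  Twisted conjugation by (V^-1, Jadj V)
   then makes (g, c g) diagonal with entries l_i (1 + l_i) and (1 - l_i)(-l_i), the latter
   in reversed order; the quotients -(1 + l_i)/(1 - l_i) are the eigenvalues of
   -N(1 + P), which gives the norm relation.  They are pairwise distinct, so -N(1 + P) is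
   strongly regular, and the theta-centralizer of (d, Jadj Q) is abelian as soon as the
   centralizer of d Q^-1 is, since z is determined by z.1, which commutes with d Q^-1. *)

Lemma signr_sum_double (R : pzRingType) (a b k : nat) :
  (a + b = k.*2)%N -> (-1) ^+ a * (-1) ^+ b = 1 :> R.
Proof. by move=> h; rewrite -exprD h -signr_odd odd_double. Qed.

Lemma signr_sum_double_pred (R : pzRingType) (a b k : nat) :
  (a + b).+1 = k.*2 -> (-1) ^+ a * (-1) ^+ b = -1 :> R.
Proof.
move=> h; rewrite -exprD -signr_odd.
have -> : odd (a + b) by rewrite -[odd _]negbK -oddS h odd_double.
by rewrite expr1.
Qed.

Lemma signr_eq_sum_double (R : pzRingType) (a b k : nat) :
  (a + b = k.*2)%N -> (-1) ^+ a = (-1) ^+ b :> R.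
Proof.
move=> h; rewrite -signr_odd -[RHS]signr_odd; congr (_ ^+ _).
by have := congr1 odd h; rewrite oddD odd_double; case: (odd a) (odd b) => [] [].
Qed.

Lemma commr_1D_1B (R : pzRingType) (x : R) : GRing.comm (1 + x) (1 - x).
Proof.
apply: commrB; first exact: commr1.
by apply/commr_sym/commrD; [exact: commr1 | exact: commr_refl].
Qed.

Lemma invr_cayley (R : unitRingType) (x : R) :
  1 + x \is a GRing.unit -> 1 - x \is a GRing.unit ->
  ((1 + x) * (1 - x)^-1)^-1 = (1 + x)^-1 * (1 - x).
Proof.
move=> u1 u2; rewrite invrM ?unitrV // invrK.
exact/commrV/commr_sym/commr_1D_1B.
Qed.

Lemma mulr1D_divr_1BN (R : unitRingType) (x : R) :
  x \is a GRing.unit -> 1 - x \is a GRing.unit ->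
  x * (1 + x) / ((1 - x) * - x) = - ((1 + x) / (1 - x)).
Proof.
move=> ux u1B; rewrite invrM ?unitrN // invrN mulNr mulrN.
have -> : x * (1 + x) = (1 + x) * x by rewrite mulrDr mulrDl mulr1 mul1r.
by rewrite !mulrA mulrK.
Qed.

Lemma twisted_fixed (R : unitRingType) (x d Q S : R) :
  x \is a GRing.unit -> Q \is a GRing.unit ->
  x * d * S = d -> x * Q * S = Q ->
  S = Q^-1 * x^-1 * Q /\ GRing.comm x (d * Q^-1).
Proof.
move=> ux uQ e_d e_Q.
have uxQ : x * Q \is a GRing.unit by rewrite unitrMl.
have eS : S = Q^-1 * x^-1 * Q by rewrite -[S](mulKr uxQ) e_Q invrM.
split=> //; rewrite /GRing.comm -{2}e_d eS !mulrA mulrK // mulrVK //.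
Qed.

Lemma commr_conjV (R : unitRingType) (Q z w : R) :
  Q \is a GRing.unit -> GRing.comm z w ->
  GRing.comm (Q^-1 * z^-1 * Q) (Q^-1 * w^-1 * Q).
Proof.
move=> uQ zw; have zVwV : GRing.comm z^-1 w^-1 by exact/commrV/commr_sym/commrV.
by rewrite /GRing.comm !mulrA !mulrK // -!(mulrA Q^-1) zVwV.
Qed.

Lemma cayley_scalar_inj (F : fieldType) (a b : F) : 2 != 0 :> F ->
  1 - a != 0 -> 1 - b != 0 -> (1 + a) / (1 - a) = (1 + b) / (1 - b) -> a = b.
Proof.
move=> two_neq0 a_neq1 b_neq1 /eqP; rewrite eqr_div // => /eqP e.
have : 2 * (a - b) = (1 + a) * (1 - b) - (1 + b) * (1 - a) by ring.
by rewrite e subrr => /eqP; rewrite mulf_eq0 (negbTE two_neq0) subr_eq0 => /eqP.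
Qed.

Section JAdjoint.
Variables (F : fieldType) (n : nat).
Local Notation m := n.*2.+1.
Local Notation J := (Jmx F m).
Implicit Types A B : 'M[F]_m.

Lemma addn_rev_ord (i : 'I_m) : (i + rev_ord i = n.*2)%N.
Proof. by case: i => i lt_i_m /=; rewrite -!addnn in lt_i_m *; lia. Qed.

Lemma JmxE (i j : 'I_m) : J i j = if j == rev_ord i then (-1) ^+ i else 0.
Proof.
rewrite mxE; case: i j => [i lt_i_m] [j lt_j_m].
rewrite -[_ == rev_ord _]val_eqE /=.
by case: eqP => h1; case: eqP => h2 //; exfalso; rewrite -!addnn in lt_i_m lt_j_m h1 h2; lia.
Qed.

Lemma mulJmxE A i j : (J *m A) i j = (-1) ^+ i * A (rev_ord i) j.
Proof.
rewrite mxE (bigD1 (rev_ord i)) //= JmxE eqxx big1 ?addr0 // => k /negbTE neq_k.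
by rewrite JmxE neq_k mul0r.
Qed.

Lemma mulmxJE A i j : (A *m J) i j = A i (rev_ord j) * (-1) ^+ (rev_ord j).
Proof.
rewrite mxE (bigD1 (rev_ord j)) //= JmxE rev_ordK eqxx big1 ?addr0 // => k neq_k.
rewrite JmxE; case: eqP => [e|]; last by rewrite mulr0.
by move: neq_k; rewrite e rev_ordK eqxx.
Qed.

Lemma mulJJ : J *m J = 1.
Proof.
apply/matrixP => i j; rewrite mulJmxE JmxE rev_ordK !mxE eq_sym.
case: eqP => [->|]; last by rewrite mulr0.
by rewrite (signr_sum_double _ (addn_rev_ord j)).
Qed.

Lemma trJmx : J^T = J.
Proof.
apply/matrixP => i j; rewrite mxE !JmxE.
have [->|neq_j] := eqVneq j (rev_ord i).
  by rewrite rev_ordK eqxx; apply/esym/signr_eq_sum_double/addn_rev_ord.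
by case: eqP => // e; move: neq_j; rewrite e rev_ordK eqxx.
Qed.

Lemma Jmx_unit : J \in unitmx.
Proof. by case: (mulmx1_unit mulJJ). Qed.

Lemma invJmx : invmx J = J.
Proof. by rewrite -[RHS](mulKmx Jmx_unit) mulJJ mulmx1. Qed.

Definition Jadj A := J *m A^T *m J.

Lemma JadjE A i j :
  Jadj A i j = (-1) ^+ i * (-1) ^+ (rev_ord j) * A (rev_ord j) (rev_ord i).
Proof. by rewrite mulmxJE mulJmxE mxE mulrAC. Qed.

Lemma JadjM A B : Jadj (A *m B) = Jadj B *m Jadj A.
Proof. by rewrite /Jadj trmx_mul !mulmxA -[_ *m J *m J]mulmxA mulJJ mulmx1. Qed.

Lemma JadjK : involutive Jadj.
Proof.
move=> A; rewrite /Jadj !trmx_mul trmxK trJmx !mulmxA mulJJ mul1mx.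
by rewrite -mulmxA mulJJ mulmx1.
Qed.

Lemma Jadj1 : Jadj 1 = 1.
Proof. by rewrite /Jadj trmx1 mulmx1 mulJJ. Qed.

Lemma JadjD A B : Jadj (A + B) = Jadj A + Jadj B.
Proof. by rewrite /Jadj linearD /= mulmxDr mulmxDl. Qed.

Lemma JadjN A : Jadj (- A) = - Jadj A.
Proof. by rewrite /Jadj linearN /= mulmxN mulNmx. Qed.

Lemma Jadj_unit A : (Jadj A \in unitmx) = (A \in unitmx).
Proof. by rewrite !unitmx_mul Jmx_unit unitmx_tr andbT. Qed.

Lemma Jadj_inv A : Jadj (invmx A) = invmx (Jadj A).
Proof.
have [uA|nuA] := boolP (A \in unitmx); last by rewrite !invmx_out // inE Jadj_unit.
have uJA : Jadj A \in unitmx by rewrite Jadj_unit.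
by rewrite -[LHS](mulKmx uJA) -JadjM mulVmx // Jadj1 mulmx1.
Qed.

Lemma Jadj_diag (d : 'rV[F]_m) : Jadj (diag_mx d) = diag_mx (\row_i d 0 (rev_ord i)).
Proof.
apply/matrixP => i j; rewrite JadjE !mxE (inj_eq rev_ord_inj) eq_sym.
case: eqP => [->|]; last by rewrite mulr0n mulr0.
by rewrite (signr_sum_double _ (addn_rev_ord j)) mul1r.
Qed.

Lemma in_unitaryE (c : {rmorphism F -> F}) (g : 'M[F]_m) :
  in_unitary c g = (Jadj (map_mx c g) *m g == 1).
Proof. by rewrite /in_unitary -(can_eq (mulKmx Jmx_unit)) mulJJ /Jadj !mulmxA. Qed.

End JAdjoint.

Lemma map_Jmx (F F' : fieldType) (f : {rmorphism F -> F'}) m :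
  map_mx f (Jmx F m) = Jmx F' m.
Proof. by apply/matrixP => i j; rewrite !mxE (fun_if f) rmorphXn rmorphN1 rmorph0. Qed.

Lemma map_Jadj (F F' : fieldType) (f : {rmorphism F -> F'}) n (A : 'M[F]_(n.*2.+1)) :
  map_mx f (Jadj A) = Jadj (map_mx f A).
Proof. by rewrite /Jadj !map_mxM map_trmx map_Jmx. Qed.

Lemma theta_Jadj (E : fieldType) (c : {rmorphism E -> E}) n (g : 'M[E]_(n.*2.+1)) :
  theta c g = invmx (Jadj (map_mx c g)).
Proof. by rewrite /theta invJmx -trmx_inv -Jadj_inv. Qed.

Lemma invmx_thetaK (K : fieldType) n (y : 'M[K]_(n.*2.+1)) : invmx (thetaK y) = Jadj y.
Proof.
by rewrite /thetaK invJmx -[_ *m _ *m Jmx K _]/(Jadj (invmx y)) Jadj_inv invmxK.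
Qed.

Section MxConj.
Variables (F : fieldType) (k : nat).
Implicit Types (A B V : 'M[F]_k) (d : 'rV[F]_k).

Definition mxconj V A := invmx V *m A *m V.

Lemma mxconjM V A B : V \in unitmx -> mxconj V (A *m B) = mxconj V A *m mxconj V B.
Proof.
move=> uV; rewrite /mxconj !mulmxA; congr (_ *m _).
by rewrite -[invmx V *m A *m V *m invmx V]mulmxA mulmxV // mulmx1.
Qed.

Lemma mxconj1 V : V \in unitmx -> mxconj V 1%:M = 1%:M.
Proof. by move=> uV; rewrite /mxconj mulmx1 mulVmx. Qed.

Lemma mxconjD V A B : mxconj V (A + B) = mxconj V A + mxconj V B.
Proof. by rewrite /mxconj mulmxDr mulmxDl. Qed.

Lemma mxconjN V A : mxconj V (- A) = - mxconj V A.
Proof. by rewrite /mxconj mulmxN mulNmx. Qed.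

Lemma mxconjK V : V \in unitmx -> cancel (mxconj V) (mxconj (invmx V)).
Proof. by move=> uV A; rewrite /mxconj invmxK !mulmxA mulmxV // mul1mx mulmxK. Qed.

Lemma mxconj_unit V A : V \in unitmx -> (mxconj V A \in unitmx) = (A \in unitmx).
Proof. by move=> uV; rewrite !unitmx_mul unitmx_inv uV andbT. Qed.

Lemma mxconj_inv V A : V \in unitmx -> mxconj V (invmx A) = invmx (mxconj V A).
Proof.
move=> uV; have [uA|nuA] := boolP (A \in unitmx); last first.
  by rewrite !invmx_out // inE mxconj_unit.
have uAV : mxconj V A \in unitmx by rewrite mxconj_unit.
by rewrite -[LHS](mulKmx uAV) -mxconjM // mulmxV // mxconj1 // mulmx1.
Qed.

Lemma diag_mx_unit d : (forall i, d 0 i != 0) -> diag_mx d \in unitmx.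
Proof. by move=> d_neq0; rewrite unitmxE det_diag unitfE; apply/prodf_neq0. Qed.

Lemma invmx_diag d : (forall i, d 0 i != 0) ->
  invmx (diag_mx d) = diag_mx (\row_i (d 0 i)^-1).
Proof.
move=> d_neq0; have dV : diag_mx d *m diag_mx (\row_i (d 0 i)^-1) = 1%:M.
  by rewrite mulmx_diag -diag_const_mx; congr diag_mx; apply/rowP => i; rewrite !mxE divff.
by rewrite -[RHS](mulKmx (diag_mx_unit d_neq0)) dV mulmx1.
Qed.

Lemma scalar_mxD_diag (a : F) d : a%:M + diag_mx d = diag_mx (\row_i (a + d 0 i)).
Proof. by rewrite -diag_const_mx -raddfD; congr diag_mx; apply/rowP => i; rewrite !mxE. Qed.

Lemma comm_diag_mx (X : 'M[F]_k) d : injective (d 0) ->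
  X *m diag_mx d = diag_mx d *m X -> X = diag_mx (\row_i X i i).
Proof.
move=> d_inj /matrixP comm; apply/matrixP => i j; rewrite !mxE.
have [->|neq_ij] := eqVneq i j; first by rewrite mulr1n.
apply/eqP; move: (comm i j); rewrite mul_mx_diag mul_diag_mx mulr0n !mxE => /eqP.
rewrite [d 0 i * _]mulrC -subr_eq0 -mulrBr mulf_eq0 subr_eq0 => /orP[//|/eqP/d_inj e].
by rewrite e eqxx in neq_ij.
Qed.

Lemma strongly_regular_mxconj_diag V h (eta : 'rV[F]_k) :
  V \in unitmx -> mxconj V h = diag_mx eta ->
  (forall i, eta 0 i != 0) -> injective (eta 0) ->
  semisimple h /\ strongly_regular h.
Proof.
move=> uV hV eta_neq0 eta_inj; split.
  by exists (invmx V); rewrite unitmx_inv invmxK; split=> //; exists eta.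
split; first by rewrite -(mxconj_unit h uV) hV diag_mx_unit.
have diagE z : z *m h = h *m z -> mxconj V z = diag_mx (\row_i mxconj V z i i).
  by move=> zh; apply: comm_diag_mx eta_inj _; rewrite -hV -!mxconjM // zh.
move=> z w _ _ /diagE zV /diagE wV.
by apply: (can_inj (mxconjK uV)); rewrite !mxconjM // zV wV diag_mxC.
Qed.

End MxConj.

Lemma phimxE (F : fieldType) k (w a : F) (i j : 'I_k.+1) :
  phimx w a k.+1 i j = if j == ordS i then (if i == k :> nat then w * a else 1) else 0.
Proof.
rewrite mxE; case: i j => [i lt_i] [j lt_j]; rewrite -[_ == ordS _]val_eqE /=.
have [->|neq_i] := eqVneq i k.
  by rewrite modnn; case: (eqVneq j k.+1) => [e|_] //; move: lt_j; rewrite e ltnn.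
by rewrite modn_small //; lia.
Qed.

Lemma map_phimx (F F' : fieldType) (f : {rmorphism F -> F'}) (w a : F) k :
  map_mx f (phimx w a k) = phimx (f w) (f a) k.
Proof. by apply/matrixP => i j; rewrite !mxE !(fun_if f) rmorph1 rmorph0 rmorphM. Qed.

Lemma Jadj_phimxN (F : fieldType) n (w a : F) :
  Jadj (phimx w (- a) n.*2.+1) = - phimx w a n.*2.+1.
Proof.
(* The superdiagonal entries pick up the sign (-1)^(2n-1) = -1 from J, while the corner
   entry picks up (-1)^(2n) = 1, which the substitution a := -a compensates. *)
apply/matrixP => i j; rewrite JadjE !mxE; case: i j => [i lt_i] [j lt_j] /=.
have -> : (n.*2.+1 - i.+1 == (n.*2.+1 - j.+1).+1)%N = (j == i.+1)%N.
  by apply/eqP/eqP; rewrite -!addnn in lt_i lt_j *; lia.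
have -> : ((n.*2.+1 - j.+1 == n.*2) && (n.*2.+1 - i.+1 == 0))%N = ((i == n.*2) && (j == 0))%N.
  by apply/idP/idP => /andP[/eqP h1 /eqP h2]; apply/andP; split; apply/eqP;
    rewrite -!addnn in lt_i lt_j h1 h2 *; lia.
have [e_j|neq_j] := eqVneq j i.+1.
  rewrite mulr1 (signr_sum_double_pred _ (k := n)) //.
  by rewrite -!addnn in lt_j *; lia.
have [->|_] := eqVneq i n.*2; have [->|_] := eqVneq j 0%N; rewrite /= ?mulr0 ?oppr0 //.
by rewrite (signr_sum_double _ (k := n.*2)) ?mul1r ?mulrN // -!addnn; lia.
Qed.

Lemma distinct_nth_roots (K : closedFieldType) k (b : K) :
  b != 0 -> k.+1%:R != 0 :> K ->
  exists2 l : 'rV[K]_k.+1, (forall i, l 0 i ^+ k.+1 = b) & injective (l 0).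
Proof.
move=> b_neq0 k1_neq0; set p := 'X^(k.+1) - b%:P.
have [rs p_split] := closed_field_poly_normal p.
rewrite lead_coefXnsubC // scale1r in p_split.
have size_rs : size rs = k.+1.
  by have := size_XnsubC b (ltn0Sn k); rewrite -/p p_split size_prod_XsubC => -[].
have rootE z : root p z -> z ^+ k.+1 = b.
  by rewrite rootE /p hornerD hornerN hornerXn hornerC subr_eq0 => /eqP.
have p_sep : separable_poly p.
  rewrite unlock; apply/Pdiv.ClosedField.coprimepP => z /rootE zk.
  rewrite /p derivB derivXn derivC subr0 hornerMn hornerXn -mulr_natr mulf_neq0 //.
  by rewrite expf_neq0 //; apply: contra_neq b_neq0 => z0; rewrite -zk z0 expr0n.
have uniq_rs : uniq rs by rewrite -separable_prod_XsubC -p_split.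
exists (\row_i rs`_i) => [i|i j]; rewrite !mxE.
  by apply: rootE; rewrite p_split root_prod_XsubC mem_nth // size_rs.
by move/eqP; rewrite nth_uniq ?size_rs // => /eqP /val_inj.
Qed.

Lemma phimx_Vandermonde (F : fieldType) k (w a : F) (l : 'rV[F]_k.+1) :
  (forall i, l 0 i ^+ k.+1 = w * a) ->
  phimx w a k.+1 *m Vandermonde k.+1 l = Vandermonde k.+1 l *m diag_mx l.
Proof.
move=> l_root; apply/matrixP => i j.
rewrite mul_mx_diag !mxE (bigD1 (ordS i)) //= big1 => [|h /negbTE neq_h]; last first.
  by rewrite phimxE neq_h mul0r.
rewrite addr0 phimxE eqxx !mxE; case: i => [i lt_i] /=.
have [->|neq_i] := eqVneq i k; first by rewrite modnn expr0 mulr1 -(l_root j) exprSr.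
by rewrite modn_small ?mul1r ?exprSr //; lia.
Qed.

Lemma Vandermonde_unitmx (F : fieldType) k (l : 'rV[F]_k) :
  injective (l 0) -> Vandermonde k l \in unitmx.
Proof.
move=> l_inj; rewrite unitmxE det_Vandermonde unitfE.
apply/prodf_neq0 => i _; apply/prodf_neq0 => j lt_ij; rewrite subr_eq0.
by apply: contraTneq lt_ij => /l_inj ->; rewrite ltnn.
Qed.

Lemma phimx_diagonalizable (F : fieldType) (K : closedFieldType) (f : {rmorphism F -> K})
    n (w a : F) :
  [/\ w * a != 0, w * a != 1 & w * a != -1] -> n.*2.+1%:R != 0 :> K ->
  exists V, exists2 l : 'rV[K]_n.*2.+1,
    V \in unitmx /\ mxconj V (map_mx f (phimx w a n.*2.+1)) = diag_mx l &
    [/\ injective (l 0), forall i, l 0 i != 0, forall i, 1 + l 0 i != 0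
      & forall i, 1 - l 0 i != 0].
Proof.
rewrite -(fmorph_eq0 f) -(fmorph_eq1 f) -(fmorph_eq f) rmorphN1 rmorphM map_phimx.
move=> [b_neq0 b_neq1 b_neqN1] m_neq0.
have [l l_root l_inj] := distinct_nth_roots b_neq0 m_neq0.
have uV := Vandermonde_unitmx l_inj.
exists (Vandermonde n.*2.+1 l), l.
  by split=> //; rewrite /mxconj -mulmxA phimx_Vandermonde // mulmxA mulVmx ?mul1mx.
split=> // i.
- by apply: contra_neq b_neq0 => li0; rewrite -(l_root i) li0 expr0n.
- apply: contra_neq b_neqN1 => /(canRL (addKr 1)); rewrite addr0 => li.
  by rewrite -(l_root i) li -signr_odd /= odd_double expr1.
- apply: contra_neq b_neq1 => /eqP; rewrite subr_eq0 => /eqP li.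
  by rewrite -(l_root i) -li expr1n.
Qed.

Definition cayley (F : fieldType) n (A : 'M[F]_n.+1) : 'M[F]_n.+1 := (1 + A) *m invmx (1 - A).

Section SkewCayley.
Variables (E : fieldType) (c : {rmorphism E -> E}) (n : nat) (P : 'M[E]_(n.*2.+1)).
Hypothesis skewP : Jadj (map_mx c P) = - P.

Lemma Jadj_map_1D : Jadj (map_mx c (1 + P)) = 1 - P.
Proof. by rewrite map_mxD map_mx1 JadjD skewP Jadj1. Qed.

Lemma Jadj_map_1B : Jadj (map_mx c (1 - P)) = 1 + P.
Proof. by rewrite map_mxD map_mxN map_mx1 JadjD JadjN skewP opprK Jadj1. Qed.

Lemma map_mul_1D : map_mx c (P *m (1 + P)) = Jadj ((1 - P) *m - P).
Proof. by rewrite -[LHS]JadjK map_mxM JadjM Jadj_map_1D skewP. Qed.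

Lemma Nmap_1D : Nmap c (1 + P) = cayley P.
Proof. by rewrite /Nmap theta_Jadj Jadj_map_1D. Qed.

Hypotheses (unit_1D : 1 + P \in unitmx) (unit_1B : 1 - P \in unitmx).

Lemma Jadj_map_cayley : Jadj (map_mx c (cayley P)) = invmx (cayley P).
Proof.
rewrite map_mxM JadjM map_invmx Jadj_inv Jadj_map_1D Jadj_map_1B.
exact/esym/invr_cayley.
Qed.

Lemma in_unitary_cayley : in_unitary c (- cayley P).
Proof.
rewrite in_unitaryE map_mxN JadjN Jadj_map_cayley mulNmx mulmxN opprK.
by rewrite mulVmx // unitmx_mul unit_1D unitmx_inv.
Qed.

End SkewCayley.

Lemma tw_act_Jadj (K : fieldType) n (x1 x2 d Q : 'M[K]_(n.*2.+1)) :
  tw_act (x1, x2) (d, Jadj Q) = (x1 *m d *m Jadj x2, Jadj (x1 *m Q *m Jadj x2)).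
Proof.
rewrite /tw_act /mul2 /inv2 /theta2 /= !invmx_thetaK.
by rewrite (JadjM (x1 *m Q)) JadjK (JadjM x1) mulmxA.
Qed.

Lemma strongly_theta_regular_Jadj (K : fieldType) n (d Q : 'M[K]_(n.*2.+1)) :
  d \in unitmx -> Q \in unitmx -> strongly_regular (d *m invmx Q) ->
  strongly_theta_regular (d, Jadj Q).
Proof.
move=> ud uQ [_ regdQ]; split; first by rewrite /GL2 /= ud Jadj_unit.
have fixedE z : GL2 z -> tw_act z (d, Jadj Q) = (d, Jadj Q) ->
    [/\ z.1 \in unitmx, z.1 *m (d *m invmx Q) = d *m invmx Q *m z.1
      & Jadj z.2 = invmx Q *m invmx z.1 *m Q].
  case: z => z1 z2 /andP[/= uz1 _]; rewrite tw_act_Jadj => -[e_d /(inv_inj (@JadjK _ _)) e_Q].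
  by have [eS comm] := twisted_fixed uz1 uQ e_d e_Q; split.
move=> [z1 z2] [w1 w2] /fixedE fz /fixedE fw /fz [/= uz1 cz ez] /fw [/= uw1 cw ew].
have zw : z1 *m w1 = w1 *m z1 := regdQ _ _ uz1 uw1 cz cw.
rewrite /mul2 /=; congr pair => //; apply: (inv_inj (@JadjK _ _)).
by rewrite !JadjM ez ew; apply: commr_conjV.
Qed.

Section Diagonalized.
Variables (K : fieldType) (n : nat) (V x : 'M[K]_(n.*2.+1)) (l : 'rV[K]_(n.*2.+1)).
Hypotheses (uV : V \in unitmx) (xV : mxconj V x = diag_mx l).
Hypotheses (l_neq0 : forall i, l 0 i != 0) (l_neqN1 : forall i, 1 + l 0 i != 0)
  (l_neq1 : forall i, 1 - l 0 i != 0).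

Local Notation t := (\row_i (l 0 i * (1 + l 0 i))).
Local Notation s := (\row_i ((1 - l 0 (rev_ord i)) * - l 0 (rev_ord i))).

Lemma mxconj_1D : mxconj V (1 + x) = diag_mx (\row_i (1 + l 0 i)).
Proof. by rewrite mxconjD mxconj1 // xV scalar_mxD_diag. Qed.

Lemma mxconj_1B : mxconj V (1 - x) = diag_mx (\row_i (1 - l 0 i)).
Proof.
rewrite mxconjD mxconjN mxconj1 // xV -raddfN scalar_mxD_diag.
by congr diag_mx; apply/rowP => i; rewrite !mxE.
Qed.

Lemma unitmx_diagonalized : [/\ x \in unitmx, 1 + x \in unitmx & 1 - x \in unitmx].
Proof.
by split; rewrite -(mxconj_unit _ uV) ?xV ?mxconj_1D ?mxconj_1B diag_mx_unit // => i;
  rewrite mxE.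
Qed.

Lemma mxconj_cayley :
  mxconj V (- cayley x) = diag_mx (\row_i (- ((1 + l 0 i) / (1 - l 0 i)))).
Proof.
have [_ _ u1B] := unitmx_diagonalized.
rewrite mxconjN mxconjM // mxconj_inv // mxconj_1D mxconj_1B.
rewrite invmx_diag => [|i]; last by rewrite mxE.
by rewrite mulmx_diag -raddfN; congr diag_mx; apply/rowP => i; rewrite !mxE.
Qed.

Lemma tw_act_diagonalized :
  tw_act (invmx V, Jadj V) (x *m (1 + x), Jadj ((1 - x) *m - x)) = diag_pair t s.
Proof.
rewrite tw_act_Jadj JadjK -[invmx V *m (x *m (1 + x)) *m V]/(mxconj V _).
rewrite -[invmx V *m ((1 - x) *m - x) *m V]/(mxconj V _) !mxconjM // mxconjN.
rewrite xV mxconj_1D mxconj_1B -raddfN !mulmx_diag Jadj_diag /diag_pair.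
by congr (diag_mx _, diag_mx _); apply/rowP => i; rewrite !mxE.
Qed.

Let GL2_V : GL2 (invmx V, Jadj V).
Proof. by rewrite /GL2 /= unitmx_inv Jadj_unit uV. Qed.

Let t_neq0 : torus_el t.
Proof. by move=> i; rewrite mxE mulf_neq0. Qed.

Let s_neq0 : torus_el s.
Proof. by move=> i; rewrite mxE mulf_neq0 ?oppr_eq0. Qed.

Lemma theta_semisimple_diagonalized :
  theta_semisimple (x *m (1 + x), Jadj ((1 - x) *m - x)).
Proof.
by exists (invmx V, Jadj V); split=> //; exists t, s; split=> //; apply: tw_act_diagonalized.
Qed.

Lemma is_norm_diagonalized :
  is_norm (- cayley x) (x *m (1 + x), Jadj ((1 - x) *m - x)).
Proof.
exists t, s; split=> //; first by exists (invmx V, Jadj V); split=> //; apply: tw_act_diagonalized.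
exists (invmx V); rewrite unitmx_inv invmxK; split=> //; apply: (etrans mxconj_cayley).
congr diag_mx; apply/rowP => i; rewrite !mxE rev_ordK.
by field; rewrite oppr_eq0 l_neq0 l_neq1.
Qed.

Hypotheses (two_neq0 : 2 != 0 :> K) (l_inj : injective (l 0)).

Lemma cayley_strongly_regular : semisimple (- cayley x) /\ strongly_regular (- cayley x).
Proof.
apply: strongly_regular_mxconj_diag uV mxconj_cayley _ _ => [i|i j].
  by rewrite mxE oppr_eq0 mulf_neq0 ?invr_eq0.
by rewrite !mxE => /oppr_inj /(cayley_scalar_inj two_neq0 (l_neq1 i) (l_neq1 j)) /l_inj.
Qed.

Lemma strongly_theta_regular_diagonalized :
  strongly_theta_regular (x *m (1 + x), Jadj ((1 - x) *m - x)).
Proof.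
have [ux u1D u1B] := unitmx_diagonalized.
have uxN : - x \in unitmx by rewrite -scaleN1r unitmxZ ?unitrN1.
apply: strongly_theta_regular_Jadj; rewrite ?unitmx_mul ?ux ?u1D ?u1B //.
rewrite (_ : x *m (1 + x) *m invmx ((1 - x) *m - x) = - cayley x).
  exact: cayley_strongly_regular.2.
exact: mulr1D_divr_1BN.
Qed.

End Diagonalized.

Section Valuation.
Variables (E : fieldType) (v : E -> int).
Hypothesis v_discrete : discrete_valuation v.

Lemma valM x y : x != 0 -> y != 0 -> v (x * y) = v x + v y.
Proof. by case: v_discrete => vM _ _; apply: vM. Qed.

Lemma val1 : v 1 = 0.
Proof.
have e : v 1 = v 1 + v 1 by rewrite -valM ?oner_neq0 // mulr1.
lia.
Qed.

Lemma valN1 : v (-1) = 0.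
Proof.
have N1_neq0 : (-1 : E) != 0 by rewrite oppr_eq0 oner_neq0.
have e : v 1 = v (-1) + v (-1) by rewrite -valM // mulrNN mulr1.
move: e; rewrite val1; lia.
Qed.

Lemma valV x : x != 0 -> v x^-1 = - v x.
Proof.
move=> x_neq0; have e : v 1 = v x + v x^-1 by rewrite -valM ?invr_eq0 // mulfV.
move: e; rewrite val1; lia.
Qed.

Lemma valX x k : x != 0 -> v (x ^+ k) = v x *+ k.
Proof.
move=> x_neq0; elim: k => [|k IHk]; first by rewrite expr0 val1.
by rewrite exprS valM ?expf_neq0 // IHk mulrS.
Qed.

Lemma val_unit_root x k : (0 < k)%N -> x ^+ k = 1 -> x != 0 /\ v x = 0.
Proof.
case: k => // k _ xk; have x_neq0 : x != 0.
  by apply: contra_eq_neq xk => ->; rewrite expr0n eq_sym oner_neq0.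
split=> //; have := valX k.+1 x_neq0; rewrite xk val1 => /esym/eqP.
by rewrite mulrn_eq0 => /eqP.
Qed.

Lemma vgeN k x : vge v k x -> vge v k (- x).
Proof.
rewrite /vge oppr_eq0; case: eqP => //= /eqP x_neq0.
by rewrite -mulN1r valM ?oppr_eq0 ?oner_neq0 // valN1 add0r.
Qed.

Lemma vgeD k x y : vge v k x -> vge v k y -> vge v k (x + y).
Proof. by case: v_discrete => _ vD _; apply: vD. Qed.

Lemma val_eq1_neq_sign x : v x = 1 -> x != 1 /\ x != -1.
Proof. by move=> vx; split; apply: contra_eq_neq vx => ->; rewrite ?val1 ?valN1. Qed.

Lemma residue_card_gt1 (P : pred E) q : P 0 -> P 1 -> residue_card v P q -> (1 < q)%N.
Proof.
move=> P0 P1 [s [size_s _ _ s_repr]].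
have O0 : in_O v 0 by rewrite /in_O /vge eqxx.
have O1 : in_O v 1 by rewrite /in_O /vge val1 lexx orbT.
have [y0 y0s m0] := s_repr 0 P0 O0; have [y1 y1s m1] := s_repr 1 P1 O1.
(* With at most one representative, 0 and 1 would be congruent modulo m. *)
have : in_m v (1 - y1 + - (0 - y0)) by apply: vgeD => //; apply: vgeN.
rewrite ltnNge; apply: contraL; rewrite -size_s.
case: s y0s y1s {s_repr size_s} => [|y [|? ?]] //= y0s y1s _.
move: y0s y1s; rewrite !mem_seq1 => /eqP -> /eqP ->.
by rewrite sub0r opprK subrK /in_m /vge val1 oner_eq0.
Qed.

End Valuation.

Lemma conj_opp_of_nonsquare (E : fieldType) (v : E -> int) (c : {rmorphism E -> E})
    (eps : E) :
  v eps = 0 -> c (eps ^+ 2) = eps ^+ 2 ->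
  ~ (exists y : E, [/\ c y = y, in_O v y & in_m v (y ^+ 2 - eps ^+ 2)]) ->
  c eps = - eps.
Proof.
move=> v_eps c_eps2 nonsq.
have : (c eps - eps) * (c eps + eps) = c eps ^+ 2 - eps ^+ 2 by ring.
rewrite -rmorphXn c_eps2 subrr => /eqP.
rewrite mulf_eq0 subr_eq0 addr_eq0 => /orP[/eqP c_eps|/eqP //].
case: nonsq; exists eps; split=> //; first by rewrite /in_O /vge v_eps lexx orbT.
by rewrite subrr /in_m /vge eqxx.
Qed.

Lemma skew_parameter (E : fieldType) (v : E -> int) (c : {rmorphism E -> E}) q
    (varpi eps u : E) :
  discrete_valuation v -> (1 < q)%N -> varpi != 0 -> v varpi = 1 ->
  eps ^+ (q ^ 2 - 1) = 1 -> c (eps ^+ 2) = eps ^+ 2 ->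
  ~ (exists y : E, [/\ c y = y, in_O v y & in_m v (y ^+ 2 - eps ^+ 2)]) ->
  c u = u -> u ^+ (q - 1) = 1 ->
  let a := eps^-1 * u in
  c a = - a /\ [/\ varpi * a != 0, varpi * a != 1 & varpi * a != -1].
Proof.
move=> dv q_gt1 varpi_neq0 v_varpi eps_root c_eps2 nonsq c_u u_root a.
have [eps_neq0 v_eps] : eps != 0 /\ v eps = 0.
  by apply: (val_unit_root dv _ eps_root); rewrite subn_gt0; nia.
have [u_neq0 v_u] : u != 0 /\ v u = 0 by apply: (val_unit_root dv _ u_root); rewrite subn_gt0.
have b_neq0 : varpi * a != 0 by rewrite !mulf_neq0 ?invr_eq0.
have v_b : v (varpi * a) = 1.
  by rewrite !valM ?mulf_neq0 ?invr_eq0 // valV // v_eps v_u v_varpi oppr0 !addr0.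
have [b_neq1 b_neqN1] := val_eq1_neq_sign dv v_b.
split=> //; rewrite rmorphM fmorphV (conj_opp_of_nonsquare v_eps c_eps2 nonsq) c_u.
by rewrite invrN mulNr.
Qed.

Unset Implicit Arguments.
Set Strict Implicit.

Theorem proposition6p2 (p q n : nat) (E : fieldType) (v : E -> int)
    (c : {rmorphism E -> E}) (varpi eps u : E)
    (K : closedFieldType) (iota : {rmorphism E -> K}) :
  unramified_quadratic_padic p q v c ->
  (* varpi : a uniformizer of F *)
  c varpi = varpi -> varpi != 0 -> v varpi = 1 ->
  (* eps in k_E^x (Teichmueller lift) with eps^2 in k_F^x a non-square in k_F *)
  eps ^+ (q ^ 2 - 1) = 1 -> c (eps ^+ 2) = eps ^+ 2 ->
  ~ (exists y : E, [/\ c y = y, in_O v y & in_m v (y ^+ 2 - eps ^+ 2)]) ->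
  (* u in k_F^x (Teichmueller lift) *)
  c u = u -> u ^+ (q - 1) = 1 ->
  (* K an algebraic closure, iota : E -> K *)
  algebraic_closure_of iota ->
  let P := phimx varpi (eps^-1 * u) n.*2.+1 in
  let g := P *m (1 + P) in
  let h := - Nmap c (1 + P) in
  [/\ g \in unitmx,
      theta_semisimple (bc iota c g) /\ strongly_theta_regular (bc iota c g),
      in_unitary c h,
      semisimple (map_mx iota h) /\ strongly_regular (map_mx iota h)
    & is_norm (map_mx iota h) (bc iota c g)].
Proof.
move=> [[char0 dv _] [_ _ _ [resF _] _]] c_varpi varpi_neq0 v_varpi eps_root c_eps2 nonsq
  c_u u_root _ P g h.
have q_gt1 : (1 < q)%N by apply: (residue_card_gt1 dv _ _ resF); rewrite /= ?rmorph0 ?rmorph1.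
have [c_a b_neq] := skew_parameter dv q_gt1 varpi_neq0 v_varpi eps_root c_eps2 nonsq c_u u_root.
have natK k : k.+1%:R != 0 :> K by rewrite -(rmorph_nat iota) fmorph_eq0 ((pcharf0P _).1 char0).
have [V [l [uV PV] [l_inj l_neq0 l_neqN1 l_neq1]]] := phimx_diagonalizable iota b_neq (natK n.*2).
have skewP : Jadj (map_mx c P) = - P by rewrite map_phimx c_varpi c_a Jadj_phimxN.
have [uPk u1Dk u1Bk] := unitmx_diagonalized uV PV l_neq0 l_neqN1 l_neq1.
have eg : bc iota c g = (map_mx iota P *m (1 + map_mx iota P),
                         Jadj ((1 - map_mx iota P) *m - map_mx iota P)).
  by rewrite /bc (map_mul_1D skewP) map_Jadj !(map_mxM, map_mxD, map_mxN, map_mx1).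
have eh : map_mx iota h = - cayley (map_mx iota P).
  by rewrite /h (Nmap_1D skewP) map_mxN map_mxM map_invmx !(map_mxD, map_mxN, map_mx1).
rewrite eh eg; split.
- by rewrite -(map_unitmx iota) map_mxM map_mxD map_mx1 unitmx_mul uPk.
- exact: conj (theta_semisimple_diagonalized uV PV l_neq0 l_neqN1 l_neq1)
    (strongly_theta_regular_diagonalized uV PV l_neq0 l_neqN1 l_neq1 (natK 1%N) l_inj).
- rewrite /h (Nmap_1D skewP); apply: (in_unitary_cayley skewP);
    by rewrite -(map_unitmx iota) !(map_mxD, map_mxN, map_mx1).
- exact: (cayley_strongly_regular uV PV l_neq0 l_neqN1 l_neq1 (natK 1%N) l_inj).
- exact: (is_norm_diagonalized uV PV l_neq0 l_neqN1 l_neq1).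
Qed.
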